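(* In the two-shock setting ($v_\pm>0$, $u_->u_+$, intermediate state $(u_*^{\epsilon_1\epsilon_2},v_*^{\epsilon_1\epsilon_2})$, shock speeds $\sigma_1^{\epsilon_1\epsilon_2},\sigma_2^{\epsilon_1\epsilon_2}$), $$\lim_{\epsilon_1,\epsilon_2\to0}\int_{\sigma_1^{\epsilon_1\epsilon_2}}^{\sigma_2^{\epsilon_1\epsilon_2}}v_*^{\epsilon_1\epsilon_2}\,d\xi=\sigma(v_+-v_-)-(u_+v_+-u_-v_-)=\tfrac12(v_-+v_+)(u_--u_+),\qquad \sigma=\tfrac12(u_-+u_+).$$
   Context: Perturbed Brio system: $u_t+(\tfrac12u^2+\tfrac12\epsilon_1v^2)_x=0$, $v_t+(uv-\epsilon_2v)_x=0$, $\epsilon_1,\epsilon_2>0$, $v>0$, with Riemann data $(u_-,v_-)$ for $x<0$, $(u_+,v_+)$ for $x>0$. A two-shock Riemann solution is one with an intermediate state $(u_*,v_* )$, $v_*>\max(v_-,v_+)$, $u_+<u_*<u_-$, such that $$u_*=u_-+(v_*-v_-)\frac{\epsilon_2-\sqrt{\epsilon_2^2+4\epsilon_1(v_*+v_-)^2}}{v_*+v_-},\qquad u_+=u_*+(v_+-v_* )\frac{\epsilon_2+\sqrt{\epsilon_2^2+4\epsilon_1(v_*+v_+)^2}}{v_*+v_+},$$ with shock speeds $\sigma_1=u_-+\frac{v_*(u_*-u_-)}{v_*-v_-}-\epsilon_2$ and $\sigma_2=u_++\frac{v_*(u_+-u_* )}{v_+-v_*}-\epsilon_2$. The limit is taken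 over parameters for which this solution exists. *)

From Stdlib Require Import Reals Lra.
Open Scope R_scope.

(* Two-shock Riemann solution of the perturbed Brio system with parameters
   e1 = epsilon_1, e2 = epsilon_2, Riemann data (um,vm) | (up,vp), and
   intermediate state (us,vs). *)
Definition two_shock (e1 e2 um vm up vp us vs : R) : Prop :=
  vs > Rmax vm vp /\ up < us < um /\
  us = um + (vs - vm) * ((e2 - sqrt (e2 ^ 2 + 4 * e1 * (vs + vm) ^ 2)) / (vs + vm)) /\
  up = us + (vp - vs) * ((e2 + sqrt (e2 ^ 2 + 4 * e1 * (vs + vp) ^ 2)) / (vs + vp)).

Definition sigma1 (e2 um vm us vs : R) : R :=
  um + vs * (us - um) / (vs - vm) - e2.
Definition sigma2 (e2 up vp us vs : R) : R :=
  up + vs * (up - us) / (vp - vs) - e2.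

From Stdlib Require Import Reals Lra Psatz.
Open Scope R_scope.

(* Write q = e2 / (vs + vm) and p = e2 / (vs + vp).  The jump conditions say
   um - us = (vs - vm) a and us - up = (vs - vp) b with a = sqrt (q^2 + 4 e1) - q
   and b = sqrt (p^2 + 4 e1) + p, and the integral vs (sigma2 - sigma1) minus its
   claimed limit equals ((vp - vm) vs (b - a) + (vm + vp) (vp b + vm a)) / 2.
   The intermediate density vs is unbounded as e1, e2 -> 0 (a delta shock
   forms), so the first term is small only through the cancellation in b - a:
   t |-> sqrt (t^2 + c) is 1-Lipschitz, hence vs |b - a| <= 2 vs (p + q) <= 4 e2.
   The second term is O(e2 + sqrt e1) because 0 <= a <= 2 sqrt e1 and
   0 <= b <= 2 p + 2 sqrt e1. *)

Lemma sqrt_sqr_plus_lipschitz (p q c : R) : 0 <= c ->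
  Rabs (sqrt (p ^ 2 + c) - sqrt (q ^ 2 + c)) <= Rabs (p - q).
Proof.
  intros Hc.
  set (X := sqrt (p ^ 2 + c)); set (Y := sqrt (q ^ 2 + c)).
  assert (HX : 0 <= X) by apply sqrt_pos.
  assert (HY : 0 <= Y) by apply sqrt_pos.
  assert (HX2 : X * X = p ^ 2 + c) by (apply sqrt_sqrt; nra).
  assert (HY2 : Y * Y = q ^ 2 + c) by (apply sqrt_sqrt; nra).
  assert (Hsq : (p * q + c) ^ 2 <= (X * Y) ^ 2).
  { replace ((X * Y) ^ 2) with ((X * X) * (Y * Y)) by ring.
    rewrite HX2, HY2. pose proof (Rmult_le_pos _ _ Hc (pow2_ge_0 (p - q))). nra. }
  assert (HXY : p * q + c <= X * Y).
  { destruct (Rle_lt_dec (p * q + c) (X * Y)); [lra |].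
    pose proof (Rmult_le_pos _ _ HX HY). nra. }
  apply Rsqr_le_abs_0; unfold Rsqr; nra.
Qed.

Lemma le_sqrt_sqr_plus (t c : R) : 0 <= t -> 0 <= c -> t <= sqrt (t ^ 2 + c).
Proof.
  intros Ht Hc. rewrite <- (sqrt_pow2 t Ht) at 1.
  apply sqrt_le_1_alt. lra.
Qed.

Lemma sqrt_sqr_plus_sqr_le (t k : R) : 0 <= t -> 0 <= k -> sqrt (t ^ 2 + k ^ 2) <= t + k.
Proof.
  intros Ht Hk. rewrite <- (sqrt_pow2 (t + k)) by lra.
  apply sqrt_le_1_alt. nra.
Qed.

Lemma sqrt_div_scale (e c w : R) : 0 < w -> 0 <= c ->
  sqrt (e ^ 2 + c * w ^ 2) / w = sqrt ((e / w) ^ 2 + c).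
Proof.
  intros Hw Hc.
  replace (e ^ 2 + c * w ^ 2) with (((e / w) ^ 2 + c) * w ^ 2) by (field; lra).
  rewrite sqrt_mult_alt by nra.
  rewrite sqrt_pow2 by lra. field; lra.
Qed.

Lemma two_shock_error_identity (e2 um vm up vp us vs a b : R) :
  vs <> vm -> vs <> vp -> us = um - (vs - vm) * a -> up = us + (vp - vs) * b ->
  vs * (sigma2 e2 up vp us vs - sigma1 e2 um vm us vs)
    - ((um + up) / 2 * (vp - vm) - (up * vp - um * vm))
  = ((vp - vm) * (vs * (b - a)) + (vm + vp) * (vp * b + vm * a)) / 2.
Proof.
  intros Hm Hp Eus Eup. unfold sigma1, sigma2. subst up us.
  field. split; apply Rminus_eq_contra; auto.
Qed.

Lemma shock_slopes_bounds (e1 e2 vm vp vs : R) :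
  0 <= e1 -> 0 <= e2 -> 0 < vm -> 0 < vp -> 0 <= vs ->
  let q := e2 / (vs + vm) in let p := e2 / (vs + vp) in
  let a := sqrt (q ^ 2 + 4 * e1) - q in let b := sqrt (p ^ 2 + 4 * e1) + p in
  0 <= vp * b + vm * a <= 2 * e2 + 2 * (vm + vp) * sqrt e1 /\
  Rabs (vs * (b - a)) <= 4 * e2.
Proof.
  intros He1 He2 Hvm Hvp Hvs q p a b.
  set (r := sqrt e1).
  assert (Hr : 0 <= r) by apply sqrt_pos.
  assert (Er : 4 * e1 = (2 * r) ^ 2).
  { replace ((2 * r) ^ 2) with (4 * (r * r)) by ring. unfold r. rewrite sqrt_sqrt; lra. }
  assert (Eq : q * (vs + vm) = e2) by (unfold q; field; lra).
  assert (Ep : p * (vs + vp) = e2) by (unfold p; field; lra).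
  assert (Hq : 0 <= q) by (unfold q; apply Rmult_le_pos; [lra | left; apply Rinv_0_lt_compat; lra]).
  assert (Hp : 0 <= p) by (unfold p; apply Rmult_le_pos; [lra | left; apply Rinv_0_lt_compat; lra]).
  assert (Hqlo := le_sqrt_sqr_plus q (4 * e1) Hq ltac:(lra)).
  assert (Hplo := le_sqrt_sqr_plus p (4 * e1) Hp ltac:(lra)).
  assert (Hqhi : sqrt (q ^ 2 + 4 * e1) <= q + 2 * r)
    by (rewrite Er; apply sqrt_sqr_plus_sqr_le; lra).
  assert (Hphi : sqrt (p ^ 2 + 4 * e1) <= p + 2 * r)
    by (rewrite Er; apply sqrt_sqr_plus_sqr_le; lra).
  assert (Hlip := sqrt_sqr_plus_lipschitz p q (4 * e1) ltac:(lra)).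
  assert (Hpq : Rabs (p - q) <= p + q) by (apply Rabs_le; lra).
  split.
  - unfold a, b. split; nra.
  - replace (vs * (b - a)) with
      (vs * (sqrt (p ^ 2 + 4 * e1) - sqrt (q ^ 2 + 4 * e1)) + vs * (p + q))
      by (unfold a, b; ring).
    eapply Rle_trans; [apply Rabs_triang |].
    rewrite !Rabs_mult, (Rabs_pos_eq vs Hvs), (Rabs_pos_eq (p + q)) by lra.
    nra.
Qed.

Lemma two_shock_slopes (e1 e2 um vm up vp us vs : R) :
  0 <= e1 -> 0 < vm -> 0 < vp -> two_shock e1 e2 um vm up vp us vs ->
  let q := e2 / (vs + vm) in let p := e2 / (vs + vp) in
  vm < vs /\ vp < vs /\
  us = um - (vs - vm) * (sqrt (q ^ 2 + 4 * e1) - q) /\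
  up = us + (vp - vs) * (sqrt (p ^ 2 + 4 * e1) + p).
Proof.
  intros He1 Hvm Hvp [Hvs [_ [Eus Eup]]] q p.
  pose proof (Rmax_l vm vp); pose proof (Rmax_r vm vp).
  repeat split; try lra.
  - unfold q. rewrite Eus, <- sqrt_div_scale by lra. field. lra.
  - unfold p. rewrite Eup at 1. rewrite <- sqrt_div_scale by lra. field. lra.
Qed.

Lemma two_shock_integral_error (e1 e2 um vm up vp us vs : R) :
  0 <= e1 -> 0 <= e2 -> 0 < vm -> 0 < vp -> two_shock e1 e2 um vm up vp us vs ->
  forall pr : Riemann_integrable (fun _ : R => vs)
                (sigma1 e2 um vm us vs) (sigma2 e2 up vp us vs),
    Rabs (RiemannInt pr - ((um + up) / 2 * (vp - vm) - (up * vp - um * vm)))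
    <= 3 * (vm + vp) * e2 + (vm + vp) ^ 2 * sqrt e1.
Proof.
  intros He1 He2 Hvm Hvp Hshock pr.
  destruct (two_shock_slopes e1 e2 um vm up vp us vs He1 Hvm Hvp Hshock)
    as [Hsm [Hsp [Eus Eup]]].
  destruct (shock_slopes_bounds e1 e2 vm vp vs He1 He2 Hvm Hvp ltac:(lra))
    as [Hmix Hdiff].
  rewrite (RiemannInt_P15 pr : RiemannInt pr = _).
  rewrite (two_shock_error_identity e2 um vm up vp us vs _ _ ltac:(lra) ltac:(lra) Eus Eup).
  set (X := vs * _) in *. set (Y := vp * _ + vm * _) in *.
  assert (Hv : Rabs (vp - vm) <= vm + vp) by (apply Rabs_le; lra).
  assert (Hr := sqrt_pos e1).
  unfold Rdiv. rewrite Rabs_mult, (Rabs_pos_eq (/ 2)) by lra.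
  eapply Rle_trans.
  { apply Rmult_le_compat_r; [lra | apply Rabs_triang]. }
  rewrite !Rabs_mult, (Rabs_pos_eq (vm + vp)), (Rabs_pos_eq Y) by lra.
  pose proof (Rabs_pos X); pose proof (Rabs_pos (vp - vm)).
  nra.
Qed.

Theorem lemma5p4 (um vm up vp : R) (hvm : 0 < vm) (hvp : 0 < vp) (hu : up < um) :
  (forall eta : R, eta > 0 ->
     exists delta : R, delta > 0 /\
       forall e1 e2 us vs : R,
         0 < e1 < delta -> 0 < e2 < delta ->
         two_shock e1 e2 um vm up vp us vs ->
         forall pr : Riemann_integrable (fun _ : R => vs)
                       (sigma1 e2 um vm us vs) (sigma2 e2 up vp us vs),
           Rabs (RiemannInt pr
                 - ((um + up) / 2 * (vp - vm) - (up * vp - um * vm))) < eta) /\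
  (um + up) / 2 * (vp - vm) - (up * vp - um * vm) = / 2 * (vm + vp) * (um - up).
Proof.
  split; [| field].
  intros eta Heta.
  set (M := vm + vp).
  set (K := 3 * M + M ^ 2).
  assert (HK : 0 < K) by (unfold K, M; nra).
  set (t := Rmin 1 (eta / K)).
  assert (Ht : 0 < t) by (apply Rmin_glb_lt; [lra | apply Rdiv_lt_0_compat; lra]).
  assert (HKt : K * t <= eta).
  { apply (Rmult_le_reg_r (/ K)); [apply Rinv_0_lt_compat; lra |].
    replace (K * t * / K) with t by (field; lra). apply Rmin_r. }
  exists (t ^ 2). split; [nra |].
  intros e1 e2 us vs He1 He2 Hshock pr.
  assert (Hr : sqrt e1 < t).
  { rewrite <- (sqrt_pow2 t) by lra. apply sqrt_lt_1_alt. lra. }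
  assert (Ht1 : t <= 1) by apply Rmin_l.
  assert (He2t : e2 < t) by nra.
  eapply Rle_lt_trans.
  { apply (two_shock_integral_error e1 e2); auto; lra. }
  fold M. unfold K in HKt.
  assert (HM : 0 < M) by (unfold M; lra).
  assert (3 * M * e2 < 3 * M * t) by (apply Rmult_lt_compat_l; lra).
  assert (M ^ 2 * sqrt e1 < M ^ 2 * t) by (apply Rmult_lt_compat_l; nra).
  lra.
Qed.
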